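(* Let $(\mathfrak{a},\alpha,\beta)$ and $(V,\alpha_{V_0},\beta_{V_1})$ be multiplicative Hom-Lie antialgebras and let $\rho=(\rho_0,\rho_1)$ be an action of $(\mathfrak{a},\alpha,\beta)$ on $(V,\alpha_{V_0},\beta_{V_1})$. Then the $\mathbb{Z}_2$-graded space $\mathfrak{a}\oplus V$ with even part $\mathfrak{a}_0\oplus V_0$ and odd part $\mathfrak{a}_1\oplus V_1$, with maps $(\alpha+\alpha_{V_0})(x,u)=(\alpha(x),\alpha_{V_0}(u))$, $(\beta+\beta_{V_1})(y,w)=(\beta(y),\beta_{V_1}(w))$ and products $(x_1,u_1)\cdot(x_2,u_2)=(x_1\cdot x_2,\ \rho_0(x_1)(u_2)+\rho_0(x_2)(u_1)+u_1\cdot u_2)$, $(x_1,u_1)\cdot(y_1,w_1)=(x_1\cdot y_1,\ \rho_0(x_1)(w_1)+\rho_1(y_1)(u_1)+u_1\cdot w_1)$, $[(y_1,w_1),(y_2,w_2)]=([y_1,y_2],\ \rho_1(y_1)(w_2)-\rho_1(y_2)(w_1)+[w_1,w_2])$ (for $x_i\in\mathfrak{a}_0$, $y_i\in\mathfrak{a}_1$, $u_i\in V_0$, $w_i\in V_1$), is a multiplicative Hom-Lie antialgebra (the semidirect product $\mathfrak{a}\ltimes V$).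
   Context: A Hom-Lie antialgebra $(\mathfrak{a},\alpha,\beta)$ is a supercommutative $\mathbb{Z}_2$-graded algebra $\mathfrak{a}=\mathfrak{a}_0\oplus\mathfrak{a}_1$ (even·even commutative, even·odd = odd·even, the product of two odd elements, written $[\cdot,\cdot]$, is skew-symmetric with values in $\mathfrak{a}_0$) with linear maps $\alpha:\mathfrak{a}_0\to\mathfrak{a}_0$, $\beta:\mathfrak{a}_1\to\mathfrak{a}_1$ such that for all $x_i\in\mathfrak{a}_0$, $y_i\in\mathfrak{a}_1$: $\alpha(x_1)\cdot(x_2\cdot x_3)=(x_1\cdot x_2)\cdot\alpha(x_3)$; $\alpha(x_1)\cdot(x_2\cdot y_1)=\tfrac12(x_1\cdot x_2)\cdot\beta(y_1)$; $\alpha(x_1)\cdot[y_1,y_2]=[x_1\cdot y_1,\beta(y_2)]+[\beta(y_1),x_1\cdot y_2]$; $\beta(y_1)\cdot[y_2,y_3]+\beta(y_2)\cdot[y_3,y_1]+\beta(y_3)\cdot[y_1,y_2]=0$. It is multiplicative if $\alpha(x_1\cdot x_2)=\alpha(x_1)\cdot\alpha(x_2)$, $\beta(x_1\cdot y_1)=\alpha(x_1)\cdot\beta(y_1)$, $\alpha([y_1,y_2])=[\beta(y_1),\beta(y_2)]$. The same notation ($\cdot$, $[\cdot,\cdot]$, $\alpha_{V_0},\beta_{V_1}$) is used for $V$. A representation of $\mathfrak{a}$ on $V$ is a pair of linear maps $\rho_0:\mathfrak{a}_0\to\operatorname{End}(V)_0=\operatorname{Hom}(V_0,V_0)\oplus\operatorname{Hom}(V_1,V_1)$,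 $\rho_1:\mathfrak{a}_1\to\operatorname{End}(V)_1=\operatorname{Hom}(V_0,V_1)\oplus\operatorname{Hom}(V_1,V_0)$ such that for all $x,x_1,x_2\in\mathfrak{a}_0$, $y,y_1,y_2\in\mathfrak{a}_1$, $u\in V_0$, $w\in V_1$: (R1) $\alpha_{V_0}(\rho_0(x)u)=\rho_0(\alpha(x))\alpha_{V_0}(u)$; (R2) $\beta_{V_1}(\rho_0(x)w)=\rho_0(\alpha(x))\beta_{V_1}(w)$; (R3) $\beta_{V_1}(\rho_1(y)u)=\rho_1(\beta(y))\alpha_{V_0}(u)$; (R4) $\alpha_{V_0}(\rho_1(y)w)=\rho_1(\beta(y))\beta_{V_1}(w)$; (R5) $\rho_0(\alpha(x_1))\rho_0(x_2)u=\rho_0(x_1\cdot x_2)\alpha_{V_0}(u)$; (R6) $\rho_0(\alpha(x_1))\rho_0(x_2)w=\tfrac12\rho_0(x_1\cdot x_2)\beta_{V_1}(w)$; (R7) $\rho_0(\alpha(x))\rho_1(y)u=\tfrac12\rho_1(\beta(y))\rho_0(x)u$; (R8) $\rho_1(x\cdot y)\alpha_{V_0}(u)=\tfrac12\rho_1(\beta(y))\rho_0(x)u$; (R9) $\rho_0(\alpha(x))\rho_1(y)w=\rho_1(x\cdot y)\beta_{V_1}(w)+\rho_1(\beta(y))\rho_0(x)w$; (R10) $\rho_0([y_1,y_2])\alpha_{V_0}(u)=\rho_1(\beta(y_1))\rho_1(y_2)u-\rho_1(\beta(y_2))\rho_1(y_1)u$; (R11) $\rho_0([y_1,y_2])\beta_{V_1}(w)=-\rho_1(\beta(y_1))\rho_1(y_2)w+\rho_1(\beta(y_2))\rho_1(y_1)w$.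 An action of $\mathfrak{a}$ on $V$ is a representation $\rho$ such that for all $x\in\mathfrak{a}_0$, $y\in\mathfrak{a}_1$, $u,u_1,u_2\in V_0$, $w,w_1,w_2\in V_1$: (A1) $\rho_0(\alpha(x))(u_1\cdot u_2)=\rho_0(x)(u_1)\cdot\alpha_{V_0}(u_2)$; (A2) $\rho_0(\alpha(x))(u\cdot w)=\tfrac12\rho_0(x)(u)\cdot\beta_{V_1}(w)$; (A3) $\rho_1(y)(u_2)\cdot\alpha_{V_0}(u_1)=\tfrac12\rho_1(\beta(y))(u_1\cdot u_2)$; (A4) $\rho_0(x)(w)\cdot\alpha_{V_0}(u)=\tfrac12\rho_0(x)(u)\cdot\beta_{V_1}(w)$; (A5) $\rho_0(\alpha(x))([w_1,w_2])=[\rho_0(x)(w_1),\beta_{V_1}(w_2)]+[\beta_{V_1}(w_1),\rho_0(x)(w_2)]$; (A6) $\rho_1(\beta(y))(u\cdot w)=\alpha_{V_0}(u)\cdot\rho_1(y)(w)-[\rho_1(y)(u),\beta_{V_1}(w)]$; (A7) $\rho_1(\beta(y))([w_1,w_2])=\beta_{V_1}(w_1)\cdot\rho_1(y)(w_2)-\beta_{V_1}(w_2)\cdot\rho_1(y)(w_1)$. *)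

From mathcomp Require Import all_boot all_algebra.
Set Implicit Arguments. Unset Strict Implicit. Unset Printing Implicit Defensive.
Import GRing.Theory.
Local Open Scope ring_scope.

Section Defs.
Variable K : fieldType.

Definition linearP {U W : lmodType K} (f : U -> W) : Prop :=
  forall (a : K) (x y : U), f (a *: x + y) = a *: f x + f y.

Definition bilinearP {U1 U2 W : lmodType K} (f : U1 -> U2 -> W) : Prop :=
  (forall z, linearP (fun x => f x z)) /\ (forall x, linearP (f x)).

(* A Hom-Lie antialgebra: even part E, odd part O, even.even product me,
   even.odd product mo (odd.even := even.odd, by supercommutativity),
   odd.odd bracket br with values in E, twisting maps al, be. *)
Definition is_HLAA {E O : lmodType K} (me : E -> E -> E) (mo : E -> O -> O)
  (br : O -> O -> E) (al : E -> E) (be : O -> O) : Prop :=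
  [/\ bilinearP me, bilinearP mo, bilinearP br, linearP al & linearP be] /\
  ((forall x1 x2, me x1 x2 = me x2 x1) /\
      (forall y1 y2, br y1 y2 = - br y2 y1) /\
      (forall x1 x2 x3, me (al x1) (me x2 x3) = me (me x1 x2) (al x3)) /\
      (forall x1 x2 y1, mo (al x1) (mo x2 y1) = 2^-1 *: mo (me x1 x2) (be y1)) /\
      (forall x1 y1 y2, me (al x1) (br y1 y2) = br (mo x1 y1) (be y2) + br (be y1) (mo x1 y2)) /\
      (forall y1 y2 y3, mo (br y2 y3) (be y1) + mo (br y3 y1) (be y2)
                         + mo (br y1 y2) (be y3) = 0)).

Definition is_multiplicative {E O : lmodType K} (me : E -> E -> E) (mo : E -> O -> O)
  (br : O -> O -> E) (al : E -> E) (be : O -> O) : Prop :=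
  [/\ (forall x1 x2, al (me x1 x2) = me (al x1) (al x2)),
      (forall x1 y1, be (mo x1 y1) = mo (al x1) (be y1))
    & (forall y1 y2, al (br y1 y2) = br (be y1) (be y2))].

Definition is_mult_HLAA {E O : lmodType K} (me : E -> E -> E) (mo : E -> O -> O)
  (br : O -> O -> E) (al : E -> E) (be : O -> O) : Prop :=
  is_HLAA me mo br al be /\ is_multiplicative me mo br al be.

(* A representation: rho0 x = (r00 x, r01 x) in Hom(V0,V0) (+) Hom(V1,V1),
   rho1 y = (r10 y, r11 y) in Hom(V0,V1) (+) Hom(V1,V0). *)
Definition is_rep {A0 A1 V0 V1 : lmodType K}
  (ame : A0 -> A0 -> A0) (amo : A0 -> A1 -> A1) (abr : A1 -> A1 -> A0)
  (al : A0 -> A0) (be : A1 -> A1) (aV : V0 -> V0) (bV : V1 -> V1)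
  (r00 : A0 -> V0 -> V0) (r01 : A0 -> V1 -> V1)
  (r10 : A1 -> V0 -> V1) (r11 : A1 -> V1 -> V0) : Prop :=
  [/\ bilinearP r00, bilinearP r01, bilinearP r10 & bilinearP r11] /\
  ((forall x u, aV (r00 x u) = r00 (al x) (aV u)) /\
      (forall x w, bV (r01 x w) = r01 (al x) (bV w)) /\
      (forall y u, bV (r10 y u) = r10 (be y) (aV u)) /\
      (forall y w, aV (r11 y w) = r11 (be y) (bV w)) /\
      (forall x1 x2 u, r00 (al x1) (r00 x2 u) = r00 (ame x1 x2) (aV u)) /\
      (forall x1 x2 w, r01 (al x1) (r01 x2 w) = 2^-1 *: r01 (ame x1 x2) (bV w)) /\
      (forall x y u, r01 (al x) (r10 y u) = 2^-1 *: r10 (be y) (r00 x u)) /\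
      (forall x y u, r10 (amo x y) (aV u) = 2^-1 *: r10 (be y) (r00 x u)) /\
      (forall x y w, r00 (al x) (r11 y w)
                     = r11 (amo x y) (bV w) + r11 (be y) (r01 x w)) /\
      (forall y1 y2 u, r00 (abr y1 y2) (aV u)
                     = r11 (be y1) (r10 y2 u) - r11 (be y2) (r10 y1 u)) /\
      (forall y1 y2 w, r01 (abr y1 y2) (bV w)
                     = - r10 (be y1) (r11 y2 w) + r10 (be y2) (r11 y1 w))).

Definition is_action {A0 A1 V0 V1 : lmodType K}
  (ame : A0 -> A0 -> A0) (amo : A0 -> A1 -> A1) (abr : A1 -> A1 -> A0)
  (al : A0 -> A0) (be : A1 -> A1)
  (vme : V0 -> V0 -> V0) (vmo : V0 -> V1 -> V1) (vbr : V1 -> V1 -> V0)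
  (aV : V0 -> V0) (bV : V1 -> V1)
  (r00 : A0 -> V0 -> V0) (r01 : A0 -> V1 -> V1)
  (r10 : A1 -> V0 -> V1) (r11 : A1 -> V1 -> V0) : Prop :=
  is_rep ame amo abr al be aV bV r00 r01 r10 r11 /\
  ((forall x u1 u2, r00 (al x) (vme u1 u2) = vme (r00 x u1) (aV u2)) /\
      (forall x u w, r01 (al x) (vmo u w) = 2^-1 *: vmo (r00 x u) (bV w)) /\
      (forall y u1 u2, vmo (aV u1) (r10 y u2) = 2^-1 *: r10 (be y) (vme u1 u2)) /\
      (forall x u w, vmo (aV u) (r01 x w) = 2^-1 *: vmo (r00 x u) (bV w)) /\
      (forall x w1 w2, r00 (al x) (vbr w1 w2)
                      = vbr (r01 x w1) (bV w2) + vbr (bV w1) (r01 x w2)) /\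
      (forall y u w, r11 (be y) (vmo u w)
                      = vme (aV u) (r11 y w) - vbr (r10 y u) (bV w)) /\
      (forall y w1 w2, r10 (be y) (vbr w1 w2)
                      = vmo (r11 y w2) (bV w1) - vmo (r11 y w1) (bV w2))).

Section Semidirect.
Variables (A0 A1 V0 V1 : lmodType K)
  (ame : A0 -> A0 -> A0) (amo : A0 -> A1 -> A1) (abr : A1 -> A1 -> A0)
  (al : A0 -> A0) (be : A1 -> A1)
  (vme : V0 -> V0 -> V0) (vmo : V0 -> V1 -> V1) (vbr : V1 -> V1 -> V0)
  (aV : V0 -> V0) (bV : V1 -> V1)
  (r00 : A0 -> V0 -> V0) (r01 : A0 -> V1 -> V1)
  (r10 : A1 -> V0 -> V1) (r11 : A1 -> V1 -> V0).

Definition sd_me (p q : A0 * V0) : A0 * V0 :=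
  (ame p.1 q.1, r00 p.1 q.2 + r00 q.1 p.2 + vme p.2 q.2).
Definition sd_mo (p : A0 * V0) (q : A1 * V1) : A1 * V1 :=
  (amo p.1 q.1, r01 p.1 q.2 + r10 q.1 p.2 + vmo p.2 q.2).
Definition sd_br (p q : A1 * V1) : A0 * V0 :=
  (abr p.1 q.1, r11 p.1 q.2 - r11 q.1 p.2 + vbr p.2 q.2).
Definition sd_al (p : A0 * V0) : A0 * V0 := (al p.1, aV p.2).
Definition sd_be (q : A1 * V1) : A1 * V1 := (be q.1, bV q.2).
End Semidirect.
End Defs.

(* Each axiom of the semidirect product splits into an a-component, which is
   the same axiom of a, and a V-component.  Expanded by bilinearity, the
   V-component is a signed sum whose summands cancel in pairs once rewritten
   by the axioms of V, of the representation (R1-R11) and of the action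
   (A1-A7); hom-associativity also needs the consequence
   [vme (aV u1) (r00 x u2) = vme (r00 x u1) (aV u2)] of A1 and commutativity. *)

From Pilot Require Import Defs.
From mathcomp Require Import all_boot all_algebra.
Set Implicit Arguments. Unset Strict Implicit.
Import GRing.Theory.
(* [GRing.Theory] exports a lemma [linearP], hence [Defs.linearP] below. *)
Local Open Scope ring_scope.

Section LinearP.
Variables (K : fieldType) (U W : lmodType K) (f : U -> W).
Hypothesis fP : Defs.linearP f.

Lemma linearP0 : f 0 = 0.
Proof.
by apply: (addIr (f 0)); rewrite add0r -{1}(scale1r (f 0)) -fP scale1r addr0.
Qed.

Lemma linearPD : {morph f : x y / x + y}.
Proof. by move=> x y; rewrite -[x]scale1r fP !scale1r. Qed.

Lemma linearPZ a : {morph f : x / a *: x}.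
Proof. by move=> x; rewrite -[a *: x]addr0 fP linearP0 addr0. Qed.

Lemma linearPN : {morph f : x / - x}.
Proof. by move=> x; rewrite -(scaleN1r x) linearPZ scaleN1r. Qed.

End LinearP.

Section BilinearP.
Variables (K : fieldType) (U1 U2 W : lmodType K) (f : U1 -> U2 -> W).
Hypothesis fP : bilinearP f.

Lemma bilinearPDl z : {morph f^~ z : x y / x + y}.
Proof. exact: linearPD (fP.1 z). Qed.
Lemma bilinearPNl z : {morph f^~ z : x / - x}.
Proof. exact: linearPN (fP.1 z). Qed.
Lemma bilinearPZl a z : {morph f^~ z : x / a *: x}.
Proof. exact: linearPZ (fP.1 z) a. Qed.
Lemma bilinearPDr z : {morph f z : x y / x + y}.
Proof. exact: linearPD (fP.2 z). Qed.
Lemma bilinearPNr z : {morph f z : x / - x}.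
Proof. exact: linearPN (fP.2 z). Qed.
Lemma bilinearPZr a z : {morph f z : x / a *: x}.
Proof. exact: linearPZ (fP.2 z) a. Qed.

End BilinearP.

Ltac expand_linear :=
  repeat match goal with
  | fP : bilinearP _ |- _ =>
      progress rewrite ?(bilinearPDl fP) ?(bilinearPDr fP) ?(bilinearPNl fP)
        ?(bilinearPNr fP) ?(bilinearPZl fP) ?(bilinearPZr fP)
  | fP : Defs.linearP _ |- _ => progress rewrite ?(linearPD fP) ?(linearPN fP) ?(linearPZ fP)
  | |- _ => progress rewrite ?scalerDr ?scalerN ?opprD ?opprK /=
  end.

Lemma addr_pull_last (V : zmodType) (x y x' a : V) : x = x' + a -> x + y = x' + y + a.
Proof. by move->; rewrite addrAC. Qed.

Lemma addr_cancel_last (V : zmodType) (s s' a b : V) :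
  a + b = 0 -> s = s' + b -> s' = 0 -> s + a = 0.
Proof. by move=> ab0 -> ->; rewrite add0r addrC. Qed.

(* [pull_last] solves [s = ?s' + a] when [a] is a summand of [s]. *)
Ltac pull_last :=
  lazymatch goal with
  | |- ?x + ?y = _ + ?a =>
      first [unify y a; reflexivity | apply: addr_pull_last; pull_last]
  | |- ?y = _ + ?a => unify y a; exact: (esym (add0r y))
  end.

Ltac cancel_summands :=
  lazymatch goal with
  | |- 0 = 0 => reflexivity
  | |- ?s + 0 = 0 => rewrite addr0; cancel_summands
  | |- 0 + ?s = 0 => rewrite add0r; cancel_summands
  | |- ?s + - ?t = 0 =>
      apply: (@addr_cancel_last _ s _ (- t) t); [exact: addNr | pull_last | cancel_summands]
  | |- ?s + ?t = 0 =>
      apply: (@addr_cancel_last _ s _ t (- t)); [exact: addrN | pull_last | cancel_summands]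
  end.

(* Closes an equation between sums of signed summands that cancel in pairs. *)
Ltac zmod_cancel :=
  apply/eqP; rewrite -subr_eq0 ?opprD ?opprK ?addrA; apply/eqP; cancel_summands.

Section SemidirectProduct.
Variables (K : fieldType) (A0 A1 V0 V1 : lmodType K)
  (ame : A0 -> A0 -> A0) (amo : A0 -> A1 -> A1) (abr : A1 -> A1 -> A0)
  (al : A0 -> A0) (be : A1 -> A1)
  (vme : V0 -> V0 -> V0) (vmo : V0 -> V1 -> V1) (vbr : V1 -> V1 -> V0)
  (aV : V0 -> V0) (bV : V1 -> V1)
  (r00 : A0 -> V0 -> V0) (r01 : A0 -> V1 -> V1)
  (r10 : A1 -> V0 -> V1) (r11 : A1 -> V1 -> V0).

Hypotheses (ame_bil : bilinearP ame) (amo_bil : bilinearP amo)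
  (abr_bil : bilinearP abr) (al_lin : Defs.linearP al) (be_lin : Defs.linearP be).
Hypotheses (vme_bil : bilinearP vme) (vmo_bil : bilinearP vmo)
  (vbr_bil : bilinearP vbr) (aV_lin : Defs.linearP aV) (bV_lin : Defs.linearP bV).
Hypotheses (r00_bil : bilinearP r00) (r01_bil : bilinearP r01)
  (r10_bil : bilinearP r10) (r11_bil : bilinearP r11).

Local Notation me := (sd_me ame vme r00).
Local Notation mo := (sd_mo amo vmo r01 r10).
Local Notation br := (sd_br abr vbr r11).
Local Notation sal := (sd_al al aV).
Local Notation sbe := (sd_be be bV).

Lemma sd_me_bilinear : bilinearP me.
Proof. by split=> z a p q; apply: injective_projections; expand_linear; zmod_cancel. Qed.

Lemma sd_mo_bilinear : bilinearP mo.
Proof. by split=> z a p q; apply: injective_projections; expand_linear; zmod_cancel. Qed.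

Lemma sd_br_bilinear : bilinearP br.
Proof. by split=> z a p q; apply: injective_projections; expand_linear; zmod_cancel. Qed.

Lemma sd_al_linear : Defs.linearP sal.
Proof. by move=> a p q; apply: injective_projections; expand_linear. Qed.

Lemma sd_be_linear : Defs.linearP sbe.
Proof. by move=> a p q; apply: injective_projections; expand_linear. Qed.

Hypotheses (ameC : forall x1 x2, ame x1 x2 = ame x2 x1)
  (abr_skew : forall y1 y2, abr y1 y2 = - abr y2 y1)
  (ame_homA : forall x1 x2 x3, ame (al x1) (ame x2 x3) = ame (ame x1 x2) (al x3))
  (amo_homA : forall x1 x2 y1, amo (al x1) (amo x2 y1) = 2^-1 *: amo (ame x1 x2) (be y1))
  (abr_homD : forall x1 y1 y2,
     ame (al x1) (abr y1 y2) = abr (amo x1 y1) (be y2) + abr (be y1) (amo x1 y2))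
  (abr_homJacobi : forall y1 y2 y3, amo (abr y2 y3) (be y1) + amo (abr y3 y1) (be y2)
                                     + amo (abr y1 y2) (be y3) = 0).
Hypotheses (vmeC : forall u1 u2, vme u1 u2 = vme u2 u1)
  (vbr_skew : forall w1 w2, vbr w1 w2 = - vbr w2 w1)
  (vme_homA : forall u1 u2 u3, vme (aV u1) (vme u2 u3) = vme (vme u1 u2) (aV u3))
  (vmo_homA : forall u1 u2 w1, vmo (aV u1) (vmo u2 w1) = 2^-1 *: vmo (vme u1 u2) (bV w1))
  (vbr_homD : forall u1 w1 w2,
     vme (aV u1) (vbr w1 w2) = vbr (vmo u1 w1) (bV w2) + vbr (bV w1) (vmo u1 w2))
  (vbr_homJacobi : forall w1 w2 w3, vmo (vbr w2 w3) (bV w1) + vmo (vbr w3 w1) (bV w2)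
                                     + vmo (vbr w1 w2) (bV w3) = 0).
Hypotheses (r00_homM : forall x1 x2 u, r00 (al x1) (r00 x2 u) = r00 (ame x1 x2) (aV u))
  (r01_homM : forall x1 x2 w, r01 (al x1) (r01 x2 w) = 2^-1 *: r01 (ame x1 x2) (bV w))
  (r01_r10 : forall x y u, r01 (al x) (r10 y u) = 2^-1 *: r10 (be y) (r00 x u))
  (r10_amo : forall x y u, r10 (amo x y) (aV u) = 2^-1 *: r10 (be y) (r00 x u))
  (r00_r11 : forall x y w, r00 (al x) (r11 y w) = r11 (amo x y) (bV w) + r11 (be y) (r01 x w))
  (r00_abr : forall y1 y2 u,
     r00 (abr y1 y2) (aV u) = r11 (be y1) (r10 y2 u) - r11 (be y2) (r10 y1 u))
  (r01_abr : forall y1 y2 w,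
     r01 (abr y1 y2) (bV w) = - r10 (be y1) (r11 y2 w) + r10 (be y2) (r11 y1 w)).
Hypotheses (r00_vme : forall x u1 u2, r00 (al x) (vme u1 u2) = vme (r00 x u1) (aV u2))
  (r01_vmo : forall x u w, r01 (al x) (vmo u w) = 2^-1 *: vmo (r00 x u) (bV w))
  (vmo_r10 : forall y u1 u2, vmo (aV u1) (r10 y u2) = 2^-1 *: r10 (be y) (vme u1 u2))
  (vmo_r01 : forall x u w, vmo (aV u) (r01 x w) = 2^-1 *: vmo (r00 x u) (bV w))
  (r00_vbr : forall x w1 w2,
     r00 (al x) (vbr w1 w2) = vbr (r01 x w1) (bV w2) + vbr (bV w1) (r01 x w2))
  (r11_vmo : forall y u w, r11 (be y) (vmo u w) = vme (aV u) (r11 y w) - vbr (r10 y u) (bV w))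
  (r10_vbr : forall y w1 w2,
     r10 (be y) (vbr w1 w2) = vmo (r11 y w2) (bV w1) - vmo (r11 y w1) (bV w2)).

Lemma sd_meC p q : me p q = me q p.
Proof.
apply: injective_projections => /=; first exact: ameC.
by rewrite (vmeC p.2); zmod_cancel.
Qed.

Lemma sd_br_skew p q : br p q = - br q p.
Proof.
apply: injective_projections; expand_linear; first exact: abr_skew.
by rewrite (vbr_skew p.2); expand_linear; zmod_cancel.
Qed.

Lemma vme_aV_r00 x u1 u2 : vme (aV u1) (r00 x u2) = vme (r00 x u1) (aV u2).
Proof. by rewrite vmeC -r00_vme vmeC r00_vme. Qed.

Lemma sd_me_homA p1 p2 p3 : me (sal p1) (me p2 p3) = me (me p1 p2) (sal p3).
Proof.
apply: injective_projections; expand_linear; first exact: ame_homA.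
by rewrite !r00_homM !r00_vme !vme_aV_r00 vme_homA (ameC p3.1 p1.1) (ameC p3.1 p2.1);
  zmod_cancel.
Qed.

Lemma sd_mo_homA p1 p2 q : mo (sal p1) (mo p2 q) = 2^-1 *: mo (me p1 p2) (sbe q).
Proof.
apply: injective_projections; expand_linear; first exact: amo_homA.
by rewrite !r01_homM !r01_r10 !r10_amo !r01_vmo !vmo_r01 !vmo_r10 vmo_homA; expand_linear;
  zmod_cancel.
Qed.

Lemma sd_br_homD p q1 q2 :
  me (sal p) (br q1 q2) = br (mo p q1) (sbe q2) + br (sbe q1) (mo p q2).
Proof.
apply: injective_projections; expand_linear; first exact: abr_homD.
rewrite !r00_r11 r00_vbr r00_abr vbr_homD !r11_vmo (vbr_skew (bV q1.2) (r10 q2.1 p.2)).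
by expand_linear; zmod_cancel.
Qed.

Lemma sd_br_homJacobi q1 q2 q3 :
  mo (br q2 q3) (sbe q1) + mo (br q3 q1) (sbe q2) + mo (br q1 q2) (sbe q3) = 0.
Proof.
apply: injective_projections; expand_linear; first exact: abr_homJacobi.
by rewrite !r01_abr !r10_vbr -(vbr_homJacobi q1.2 q2.2 q3.2); expand_linear; zmod_cancel.
Qed.

Hypotheses (al_ame : forall x1 x2, al (ame x1 x2) = ame (al x1) (al x2))
  (be_amo : forall x1 y1, be (amo x1 y1) = amo (al x1) (be y1))
  (al_abr : forall y1 y2, al (abr y1 y2) = abr (be y1) (be y2)).
Hypotheses (aV_vme : forall u1 u2, aV (vme u1 u2) = vme (aV u1) (aV u2))
  (bV_vmo : forall u1 w1, bV (vmo u1 w1) = vmo (aV u1) (bV w1))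
  (aV_vbr : forall w1 w2, aV (vbr w1 w2) = vbr (bV w1) (bV w2)).
Hypotheses (aV_r00 : forall x u, aV (r00 x u) = r00 (al x) (aV u))
  (bV_r01 : forall x w, bV (r01 x w) = r01 (al x) (bV w))
  (bV_r10 : forall y u, bV (r10 y u) = r10 (be y) (aV u))
  (aV_r11 : forall y w, aV (r11 y w) = r11 (be y) (bV w)).

Lemma sd_al_me p1 p2 : sal (me p1 p2) = me (sal p1) (sal p2).
Proof.
apply: injective_projections; expand_linear; first exact: al_ame.
by rewrite !aV_r00 aV_vme.
Qed.

Lemma sd_be_mo p q : sbe (mo p q) = mo (sal p) (sbe q).
Proof.
apply: injective_projections; expand_linear; first exact: be_amo.
by rewrite bV_r01 bV_r10 bV_vmo.
Qed.

Lemma sd_al_br q1 q2 : sal (br q1 q2) = br (sbe q1) (sbe q2).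
Proof.
apply: injective_projections; expand_linear; first exact: al_abr.
by rewrite !aV_r11 aV_vbr.
Qed.

End SemidirectProduct.

Theorem theorem3p4 (K : fieldType) (two_neq0 : (2%:R : K) != 0)
  (A0 A1 V0 V1 : lmodType K)
  (ame : A0 -> A0 -> A0) (amo : A0 -> A1 -> A1) (abr : A1 -> A1 -> A0)
  (al : A0 -> A0) (be : A1 -> A1)
  (vme : V0 -> V0 -> V0) (vmo : V0 -> V1 -> V1) (vbr : V1 -> V1 -> V0)
  (aV : V0 -> V0) (bV : V1 -> V1)
  (r00 : A0 -> V0 -> V0) (r01 : A0 -> V1 -> V1)
  (r10 : A1 -> V0 -> V1) (r11 : A1 -> V1 -> V0) :
  is_mult_HLAA ame amo abr al be ->
  is_mult_HLAA vme vmo vbr aV bV ->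
  is_action ame amo abr al be vme vmo vbr aV bV r00 r01 r10 r11 ->
  is_mult_HLAA (sd_me ame vme r00) (sd_mo amo vmo r01 r10) (sd_br abr vbr r11)
    (sd_al al aV) (sd_be be bV).
Proof.
move=> [[[? ? ? ? ?] [? [? [? [? [? ?]]]]]] [? ? ?]].
move=> [[[? ? ? ? ?] [? [? [? [? [? ?]]]]]] [? ? ?]].
move=> [[[? ? ? ?] [? [? [? [? [? [? [? [? [? [? ?]]]]]]]]]]] [? [? [? [? [? [? ?]]]]]]].
split; [split; [split | do !split] | split].
- exact: sd_me_bilinear.
- exact: sd_mo_bilinear.
- exact: sd_br_bilinear.
- exact: sd_al_linear.
- exact: sd_be_linear.
- exact: sd_meC.
- exact: sd_br_skew.
- exact: sd_me_homA.
- exact: sd_mo_homA.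
- exact: sd_br_homD.
- exact: sd_br_homJacobi.
- exact: sd_al_me.
- exact: sd_be_mo.
- exact: sd_al_br.
Qed.
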